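(* If $\mathcal{O}$ is a set of upwards closed modalities, then for all $r,r'\in TT\mathbf{1}$ the following are equivalent: (1) $r\preccurlyeq r'$; (2) for all $A\subseteq T\mathbf{1}$, $r[\in A]\trianglelefteq r'[\in {\trianglelefteq}[A]]$; (3) for all $o\in\mathcal{O}$ and all $A\subseteq T\mathbf{1}$, $r\in o(A)$ implies $r'\in o({\trianglelefteq}[A])$.
   Context: $\Sigma$ is a signature of effect operations with arities $\alpha^n\to\alpha$, $\mathbf{N}\times\alpha^n\to\alpha$, $\alpha^{\mathbf{N}}\to\alpha$ or $\mathbf{N}\times\alpha^{\mathbf{N}}\to\alpha$. $TX$ is the set of possibly infinite labelled trees with leaves $\bot$ or elements of $X$ and internal nodes labelled by operations (or $\sigma_m$, $m\in\mathbb{N}$) with children according to arity; $t\le t'$ iff $t$ is obtained from $t'$ by replacing subtrees with $\bot$. $\mathbf{1}=\{*\}$. A set $\mathcal{O}$ of modalities is given with $[\![o]\!]\subseteq T\mathbf{1}$; $o$ is upwards closed if $[\![o]\!]$ is upward closed under $\le$. For $t\in TX$, $P\subseteq X$, $t[\in P]\in T\mathbf{1}$ replaces leaves in $P$ by $*$ and other $X$-leaves by $\bot$; $o(A)=\{t\in TX\mid t[\in A]\in[\![o]\!]\}$. $\mathcal{T}$ is the least class of formulas containing $o(\top),o(\bot)$ ($o\in\mathcal{O}$) closed under arbitrary $\bigvee,\bigwedge$, with $[\![o(\top)]\!]=o(\{*\})$, $[\![o(\bot)]\!]=o(\emptyset)$, unions/intersections. On $T\mathbf{1}$: $t\trianglelefteq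 t'$ iff $\forall\Phi\in\mathcal{T}$, $t\in[\![\Phi]\!]\Rightarrow t'\in[\![\Phi]\!]$. On $TT\mathbf{1}$: $r\preccurlyeq r'$ iff $\forall o\in\mathcal{O}\,\forall\Phi\in\mathcal{T}$, $r\in o([\![\Phi]\!])\Rightarrow r'\in o([\![\Phi]\!])$. For a relation $R$ and set $A$, $R[A]=\{y\mid\exists x\in A,\ xRy\}$. *)

From Stdlib Require Import ClassicalEpsilon.
Set Implicit Arguments.
Unset Strict Implicit.

(* A signature of node labels with arities: [L] is the set of labels of
   internal nodes (operations, operations paired with their N-parameter,
   and the sigma_m nodes), [ar l] indexes the children of a node labelled l
   ('I_n-like for alpha^n, nat for alpha^N). *)

CoInductive tree (L : Type) (ar : L -> Type) (X : Type) : Type :=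
| TBot : tree ar X
| TLeaf : X -> tree ar X
| TNode : forall l : L, (ar l -> tree ar X) -> tree ar X.
Arguments TBot {L ar X}.
Arguments TLeaf {L ar X} _.
Arguments TNode {L ar X} _ _.

Definition one := unit.

CoInductive tle (L : Type) (ar : L -> Type) (X : Type) : tree ar X -> tree ar X -> Prop :=
| tle_bot : forall t, tle TBot t
| tle_leaf : forall x, tle (TLeaf x) (TLeaf x)
| tle_node : forall l (k k' : ar l -> tree ar X),
    (forall p, tle (k p) (k' p)) -> tle (TNode l k) (TNode l k').

(* t[in P] : leaves in P become *, other X-leaves become bottom *)
CoFixpoint restr (L : Type) (ar : L -> Type) (X : Type) (P : X -> Prop)
  (t : tree ar X) : tree ar one :=
  match t with
  | TBot => TBot
  | TLeaf x => if excluded_middle_informative (P x) then TLeaf tt else TBot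
  | TNode l k => TNode l (fun p => restr P (k p))
  end.

(* o(A) = { t in T X | t[in A] in [[o]] }, where [[o]] = sem o *)
Definition omod (L : Type) (ar : L -> Type) (O : Type)
  (sem : O -> tree ar one -> Prop) (o : O) (X : Type) (A : X -> Prop)
  : tree ar X -> Prop :=
  fun t => sem o (restr A t).

Definition upwards_closed (L : Type) (ar : L -> Type) (O : Type)
  (sem : O -> tree ar one -> Prop) : Prop :=
  forall o t t', sem o t -> tle t t' -> sem o t'.

(* The denotations [[Phi]] of formulas Phi in the class 𝒯: least class
   containing o(top), o(bot) and closed under arbitrary joins and meets. *)
Inductive Tden (L : Type) (ar : L -> Type) (O : Type)
  (sem : O -> tree ar one -> Prop) : (tree ar one -> Prop) -> Prop :=
| Tden_top : forall o, Tden sem (omod sem o (fun _ : one => True))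
| Tden_bot : forall o, Tden sem (omod sem o (fun _ : one => False))
| Tden_join : forall (I : Type) (F : I -> tree ar one -> Prop),
    (forall i, Tden sem (F i)) -> Tden sem (fun t => exists i, F i t)
| Tden_meet : forall (I : Type) (F : I -> tree ar one -> Prop),
    (forall i, Tden sem (F i)) -> Tden sem (fun t => forall i, F i t).

Definition tri (L : Type) (ar : L -> Type) (O : Type)
  (sem : O -> tree ar one -> Prop) (t t' : tree ar one) : Prop :=
  forall Phi, Tden sem Phi -> Phi t -> Phi t'.

Definition curly (L : Type) (ar : L -> Type) (O : Type)
  (sem : O -> tree ar one -> Prop) (r r' : tree ar (tree ar one)) : Prop :=
  forall (o : O) Phi, Tden sem Phi -> omod sem o Phi r -> omod sem o Phi r'.

Definition rimage (Y : Type) (R : Y -> Y -> Prop) (A : Y -> Prop) : Y -> Prop :=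
  fun y => exists x, A x /\ R x y.

(* Since the modalities are upwards closed, o(P) cannot distinguish ≤-equivalent trees, and
   (r[∈ A])[∈ P] is ≤-equivalent to r[∈ A ∩ P]; this turns (2) into (3) and back, by
   induction on formulas. For (1) <-> (3): every formula is ⊴-upward closed, and conversely
   the ⊴-upward closure of any set A is a formula, namely the join over x ∈ A of the meet of
   all formulas satisfied by x. *)

From Stdlib Require Import ClassicalEpsilon.
Set Implicit Arguments.
Unset Strict Implicit.

Section Restriction.

Variables (L : Type) (ar : L -> Type).

Lemma tree_unfold X (t : tree ar X) :
  t = match t with TBot => TBot | TLeaf x => TLeaf x | TNode l k => TNode l k end.
Proof. destruct t; reflexivity. Qed.

Lemma restr_mono X (P Q : X -> Prop) :
  (forall x, P x -> Q x) -> forall t : tree ar X, tle (restr P t) (restr Q t).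
Proof.
  intros HPQ. cofix CH. intros t.
  rewrite (tree_unfold (restr P t)), (tree_unfold (restr Q t)).
  destruct t as [|x|l k]; simpl.
  - constructor.
  - repeat destruct excluded_middle_informative; first [constructor | firstorder].
  - constructor. intros p. apply CH.
Qed.

Lemma restr_restr_le X (A B : X -> Prop) (P : one -> Prop) :
  (forall x, A x /\ P tt -> B x) ->
  forall t : tree ar X, tle (restr P (restr A t)) (restr B t).
Proof.
  intros HAB. cofix CH. intros t.
  rewrite (tree_unfold (restr P (restr A t))), (tree_unfold (restr B t)).
  destruct t as [|x|l k]; simpl.
  - constructor.
  - destruct (excluded_middle_informative (A x)); simpl;
      repeat destruct excluded_middle_informative; first [constructor | firstorder].
  - constructor. intros p. apply CH.
Qed.

Lemma restr_restr_ge X (A B : X -> Prop) (P : one -> Prop) :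
  (forall x, B x -> A x /\ P tt) ->
  forall t : tree ar X, tle (restr B t) (restr P (restr A t)).
Proof.
  intros HBA. cofix CH. intros t.
  rewrite (tree_unfold (restr P (restr A t))), (tree_unfold (restr B t)).
  destruct t as [|x|l k]; simpl.
  - constructor.
  - destruct (excluded_middle_informative (A x)); simpl;
      repeat destruct excluded_middle_informative; first [constructor | firstorder].
  - constructor. intros p. apply CH.
Qed.

End Restriction.

Section Transfer.

Variables (L : Type) (ar : L -> Type) (O : Type) (sem : O -> tree ar one -> Prop).
Hypothesis sem_up : upwards_closed sem.

Lemma omod_mono o X (P Q : X -> Prop) (t : tree ar X) :
  (forall x, P x -> Q x) -> omod sem o P t -> omod sem o Q t.
Proof. intros HPQ HP. exact (sem_up HP (restr_mono HPQ t)). Qed.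

Lemma omod_restr o X (A : X -> Prop) (P : one -> Prop) (t : tree ar X) :
  omod sem o P (restr A t) <-> omod sem o (fun x => A x /\ P tt) t.
Proof.
  split; intros H; eapply sem_up; try exact H.
  - apply restr_restr_le. tauto.
  - apply restr_restr_ge. tauto.
Qed.

Lemma tri_refl (t : tree ar one) : tri sem t t.
Proof. intros Phi _ H. exact H. Qed.

Lemma Tden_tri_closed Phi t : Tden sem Phi -> rimage (tri sem) Phi t -> Phi t.
Proof. intros HPhi [x [Hx Hxt]]. exact (Hxt Phi HPhi Hx). Qed.

Lemma Tden_tri_closure (A : tree ar one -> Prop) :
  exists Psi, Tden sem Psi /\ forall t, Psi t <-> rimage (tri sem) A t.
Proof.
  exists (fun t => exists x : {x | A x},
            forall Phi : {Phi | Tden sem Phi /\ Phi (proj1_sig x)}, proj1_sig Phi t).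
  split.
  - apply Tden_join. intros x. apply Tden_meet. intros Phi.
    exact (proj1 (proj2_sig Phi)).
  - intros t. split.
    + intros [[x Ax] Hx]. exists x. split; [exact Ax|].
      intros Phi HPhi HPx. exact (Hx (exist _ Phi (conj HPhi HPx))).
    + intros [x [Ax Hxt]]. exists (exist _ x Ax).
      intros [Phi [HPhi HPx]]. exact (Hxt Phi HPhi HPx).
Qed.

Definition tri_transfer (r r' : tree ar (tree ar one)) : Prop :=
  forall A, tri sem (restr A r) (restr (rimage (tri sem) A) r').

Definition omod_transfer (r r' : tree ar (tree ar one)) : Prop :=
  forall o A, omod sem o A r -> omod sem o (rimage (tri sem) A) r'.

Variables r r' : tree ar (tree ar one).

Lemma curly_of_omod_transfer : omod_transfer r r' -> curly sem r r'.
Proof.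
  intros Htr o Phi HPhi Hr.
  apply (omod_mono (P := rimage (tri sem) Phi)); [|exact (Htr o Phi Hr)].
  intros t. exact (Tden_tri_closed HPhi).
Qed.

Lemma omod_transfer_of_curly : curly sem r r' -> omod_transfer r r'.
Proof.
  intros Hcurly o A Hr.
  destruct (Tden_tri_closure A) as [Psi [HPsi Psi_closure]].
  apply (omod_mono (P := Psi)); [intros t; apply Psi_closure|].
  apply Hcurly; [exact HPsi|].
  apply (omod_mono (P := A)); [|exact Hr].
  intros t At. apply Psi_closure. exists t. split; [exact At | apply tri_refl].
Qed.

Lemma omod_transfer_of_tri_transfer : tri_transfer r r' -> omod_transfer r r'.
Proof.
  intros Htr o A Hr.
  assert (HrA : omod sem o (fun _ => True) (restr A r)).
  { apply omod_restr. revert Hr. apply omod_mono. tauto. }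
  apply (Htr A) in HrA; [|apply Tden_top].
  apply omod_restr in HrA. revert HrA. apply omod_mono. tauto.
Qed.

Lemma omod_restr_transfer o A (P : one -> Prop) :
  omod_transfer r r' -> omod sem o P (restr A r) ->
  omod sem o P (restr (rimage (tri sem) A) r').
Proof.
  intros Htr HrA. apply omod_restr. apply omod_restr in HrA.
  apply Htr in HrA. revert HrA. apply omod_mono.
  intros t [x [[Ax Ptt] Hxt]]. split; [exists x|]; tauto.
Qed.

Lemma tri_transfer_of_omod_transfer : omod_transfer r r' -> tri_transfer r r'.
Proof.
  intros Htr A Phi HPhi. induction HPhi as [o|o| |].
  - apply omod_restr_transfer, Htr.
  - apply omod_restr_transfer, Htr.
  - intros [i Hi]. exists i. auto.
  - intros Hi i. auto.
Qed.

Lemma curly_iff_omod_transfer : curly sem r r' <-> omod_transfer r r'.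
Proof. split; [apply omod_transfer_of_curly | apply curly_of_omod_transfer]. Qed.

Lemma tri_transfer_iff_omod_transfer : tri_transfer r r' <-> omod_transfer r r'.
Proof.
  split; [apply omod_transfer_of_tri_transfer | apply tri_transfer_of_omod_transfer].
Qed.

End Transfer.

Theorem lemma4p14 (L : Type) (ar : L -> Type) (O : Type)
  (sem : O -> tree ar one -> Prop) :
  upwards_closed sem ->
  forall r r' : tree ar (tree ar one),
    (curly sem r r' <->
     (forall A : tree ar one -> Prop,
        tri sem (restr A r) (restr (rimage (tri sem) A) r'))) /\
    ((forall A : tree ar one -> Prop,
        tri sem (restr A r) (restr (rimage (tri sem) A) r')) <->
     (forall (o : O) (A : tree ar one -> Prop),
        omod sem o A r -> omod sem o (rimage (tri sem) A) r')).
Proof.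
  intros sem_up r r'.
  pose proof (curly_iff_omod_transfer sem_up r r') as curly_iff.
  pose proof (tri_transfer_iff_omod_transfer sem_up r r') as tri_iff.
  unfold tri_transfer, omod_transfer in *. tauto.
Qed.
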